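(* Let $K$ be a field, $S=K[x_1,\dots,x_n]$, $A\subseteq\{1,\dots,n\}$, $f=\prod_{j\in A}x_j$, and let $J\subset I\subset S_f$ be monomial ideals. Let $\mathcal D: I/J=\bigoplus_{i=1}^r u_iK[Z_i]$ be a Stanley decomposition of $I/J$ and $d=\max\{|Z_i|: 1\le i\le r\}$. Then $H_{I/J}(t)=P_{I/J}(t)/(1-t)^d$ for a polynomial $P_{I/J}(t)$ with $P_{I/J}(1)=|\{i:\ |Z_i|=d\}|$.
   Context: $S_f=K[x_1,\dots,x_n,x_j^{-1}:j\in A]$; its monomials are $x^a=x_1^{a_1}\cdots x_n^{a_n}$ with $a_j\in\mathbb Z$ for $j\in A$, $a_j\in\mathbb N$ for $j\notin A$, and form a $K$-basis. Monomial ideals are ideals generated by monomials; for monomial ideals $J\subset I\subset S_f$, $I/J$ has $K$-basis the (classes of) monomials in $I\setminus J$, and is $\mathbb Z^n$-graded with $x^a$ of degree $a$. A Stanley space of $I/J$ is $uK[Z]$, the $K$-span in $I/J$ of all $uw$ with $w$ a monomial in elements of $Z$, where $u\in I\setminus J$ is a monomial, $Z\subseteq\{x_1,\dots,x_n\}\cup\{x_j^{-1}:j\in A\}$ with $\{x_j,x_j^{-1}\}\not\subseteq Z$ for $j\in A$, and $uK[Z]$ is a free $K[Z]$-submodule of $I/J$; its dimension is $|Z|$. A Stanley decomposition is a finite direct sum decomposition (as $K$-vector spaces) of $I/J$ into Stanley spaces. Hilbert series: for a $\mathbb Z^n$-graded $K$-vector space $M=\bigoplus_{a\in\mathbb Z^n}M_a$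 with all $\dim_K M_a<\infty$, set $|a|=\sum_j|a_j|$, $M_d=\bigoplus_{|a|=d}M_a$ for $d\in\mathbb N$, $H(M,d)=\dim_K M_d$ and $H_M(t)=\sum_{d\ge0}H(M,d)t^d$. *)

(* Combinatorial model of monomial quotients I/J of
   S_f = K[x_1..x_n, x_j^{-1} : j in A]: a monomial x^a is its exponent
   vector a : 'I_n -> int; a monomial ideal is given by its set of monomials. *)
From mathcomp Require Import all_boot all_order all_algebra.
Set Implicit Arguments. Unset Strict Implicit. Unset Printing Implicit Defensive.
Import Order.TTheory GRing.Theory Num.Theory.
Local Open Scope ring_scope.

Definition mon (n : nat) := {ffun 'I_n -> int}.

Definition mmul n (a b : mon n) : mon n := [ffun i => a i + b i].

Definition is_mono n (A : {set 'I_n}) (a : mon n) : Prop :=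
  forall j, j \notin A -> 0 <= a j.

(* a monomial ideal of S_f, described by the set of monomials it contains
   (these form a K-basis of the ideal) *)
Definition monideal n (A : {set 'I_n}) (I : pred (mon n)) : Prop :=
  (forall a, I a -> is_mono A a) /\
  (forall a b, I a -> is_mono A b -> I (mmul a b)).

(* A set Z of variables is encoded as (Zp, Zm): Zp = {j | x_j in Z},
   Zm = {j | x_j^{-1} in Z}. *)
Definition varset n := ({set 'I_n} * {set 'I_n})%type.

Definition valid_varset n (A : {set 'I_n}) (Z : varset n) : Prop :=
  Z.2 \subset A /\ [disjoint Z.1 & Z.2].

Definition zdim n (Z : varset n) : nat := (#|Z.1| + #|Z.2|)%N.

Definition monZ n (Z : varset n) (w : mon n) : Prop :=
  forall j, (j \in Z.1 -> 0 <= w j) /\ (j \in Z.2 -> w j <= 0) /\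
            (j \notin Z.1 -> j \notin Z.2 -> w j = 0).

(* u K[Z] is a Stanley space of I/J: u monomial in I \ J, and u K[Z] is a
   free K[Z]-submodule of I/J, i.e. no u*w (w monomial in Z) vanishes in I/J *)
Definition stanley_space n (A : {set 'I_n}) (I J : pred (mon n))
    (u : mon n) (Z : varset n) : Prop :=
  valid_varset A Z /\ I u /\ ~~ J u /\
  (forall w, monZ Z w -> ~~ J (mmul u w)).

(* I/J = (+)_{i<r} u_i K[Z_i] as K-vector spaces: every monomial of I \ J
   lies in some u_i K[Z_i], and the monomial sets of distinct summands are
   disjoint (direct sum of spans of subsets of a monomial basis). *)
Definition stanley_decomp n (A : {set 'I_n}) (I J : pred (mon n)) (r : nat)
    (u : 'I_r -> mon n) (Z : 'I_r -> varset n) : Prop :=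
  (forall i, stanley_space A I J (u i) (Z i)) /\
  (forall a, I a -> ~~ J a -> exists i w, monZ (Z i) w /\ a = mmul (u i) w) /\
  (forall i1 i2 w1 w2, monZ (Z i1) w1 -> monZ (Z i2) w2 ->
     mmul (u i1) w1 = mmul (u i2) w2 -> i1 = i2).

Definition absdeg n (a : mon n) : nat := (\sum_(i < n) `|a i|)%N.

(* vectors with entries in [-k, k], enumerated via a finite type *)
Definition shiftv n k (v : {ffun 'I_n -> 'I_(k.*2).+1}) : mon n :=
  [ffun i => (nat_of_ord (v i))%:Z - k%:Z].

Definition hilb n (I J : pred (mon n)) (k : nat) : nat :=
  #|[pred v : {ffun 'I_n -> 'I_(k.*2).+1} |
      (absdeg (shiftv v) == k) && I (shiftv v) && ~~ J (shiftv v)]|.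

From mathcomp Require Import all_boot all_order all_algebra zify.
Set Implicit Arguments. Unset Strict Implicit. Unset Printing Implicit Defensive.
Import Order.TTheory GRing.Theory Num.Theory.
Local Open Scope ring_scope.

(* The Hilbert series of a Stanley space u K[Z] factors over the coordinates:
   the exponents a_j = u_j + w_j allowed in coordinate j contribute t^|u_j| if
   neither x_j nor x_j^-1 is in Z, and p_j(t)/(1-t) with p_j(1) = 1 otherwise,
   because for |a_j| > |u_j| exactly one of +-|a_j| is allowed.  Hence
   H_{u K[Z]}(t) = p(t)/(1-t)^|Z| with p(1) = 1, and summing over the direct
   decomposition and clearing the denominator (1-t)^d gives the numerator
   sum_i p_i(t) (1-t)^(d-|Z_i|), whose value at 1 counts the i with |Z_i| = d.
   Power series are handled through their truncations below degree N. *)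

Section TruncatedSeries.
Variable R : comNzRingType.

Definition eqtrunc (N : nat) (p q : {poly R}) := forall i, (i < N)%N -> p`_i = q`_i.

Lemma eqtrunc_refl N p : eqtrunc N p p. Proof. by []. Qed.

Lemma eqtrunc_trans N p q s : eqtrunc N p q -> eqtrunc N q s -> eqtrunc N p s.
Proof. by move=> pq qs i ltiN; rewrite pq ?qs. Qed.

Lemma eqtruncM N p q p' q' :
  eqtrunc N p q -> eqtrunc N p' q' -> eqtrunc N (p * p') (q * q').
Proof.
move=> pq pq' i ltiN; rewrite !coefM; apply: eq_bigr => j _.
have ltjN : (j < N)%N by have := ltn_ord j; lia.
by rewrite pq // pq' //; lia.
Qed.

Lemma eqtruncX N p q e : eqtrunc N p q -> eqtrunc N (p ^+ e) (q ^+ e).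
Proof.
move=> pq; elim: e => [|e IHe]; first exact: eqtrunc_refl.
by rewrite !exprS; apply: eqtruncM.
Qed.

Lemma eqtrunc_sum N (T : finType) (F G : T -> {poly R}) :
  (forall x, eqtrunc N (F x) (G x)) -> eqtrunc N (\sum_x F x) (\sum_x G x).
Proof. by move=> FG i ltiN; rewrite !coef_sum; apply: eq_bigr => x _; rewrite FG. Qed.

Lemma eqtrunc_prod N (T : finType) (F G : T -> {poly R}) :
  (forall x, eqtrunc N (F x) (G x)) -> eqtrunc N (\prod_x F x) (\prod_x G x).
Proof. by move=> FG; apply: (big_ind2 (eqtrunc N)) => // *; apply: eqtruncM. Qed.

Definition geom (N : nat) : {poly R} := \poly_(i < N) 1.

Lemma coef_geom N i : (geom N)`_i = (i < N)%N%:R.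
Proof. by rewrite coef_poly; case: ltnP. Qed.

Lemma geom_mul_subX N : eqtrunc N (geom N * (1 - 'X)) 1.
Proof.
move=> [|i] ltiN; rewrite mulrBr mulr1 coefB coefMX coef1 !coef_geom ltiN /= ?subr0 //.
by rewrite ltnW // subrr.
Qed.

Lemma eqtrunc_geom M N : (M <= N)%N -> eqtrunc M (geom M) (geom N).
Proof. by move=> leMN i ltiM; rewrite !coef_geom ltiM (leq_trans ltiM). Qed.

Lemma eqtrunc_clear_geom (T : finType) (F : T -> {poly R}) (z : T -> nat) d N :
  (forall x, (z x <= d)%N) ->
  eqtrunc N ((\sum_x F x * geom N ^+ z x) * (1 - 'X) ^+ d)
            (\sum_x F x * (1 - 'X) ^+ (d - z x)).
Proof.
move=> le_zd; rewrite mulr_suml; apply: eqtrunc_sum => x.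
have -> : F x * geom N ^+ z x * (1 - 'X) ^+ d =
    F x * (geom N * (1 - 'X)) ^+ z x * (1 - 'X) ^+ (d - z x).
  by rewrite exprMn -!mulrA -exprD subnKC.
have := eqtruncM (eqtruncM (eqtrunc_refl (F x)) (eqtruncX (z x) (@geom_mul_subX N)))
                 (eqtrunc_refl ((1 - 'X) ^+ (d - z x))).
by rewrite expr1n mulr1.
Qed.

Lemma horner1_clear_geom (T : finType) (F : T -> {poly R}) (z : T -> nat) d :
  (forall x, (z x <= d)%N) -> (forall x, (F x).[1] = 1) ->
  (\sum_x F x * (1 - 'X) ^+ (d - z x)).[1] = #|[set x | z x == d]|%:R.
Proof.
move=> le_zd F1; rewrite horner_sum -sum1_card natr_sum [RHS]big_mkcond /=.
apply: eq_bigr => x _; rewrite hornerM F1 horner_exp !hornerE subrr inE expr0n.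
case: (eqVneq (z x) d) => [->|ne_zd]; first by rewrite subnn.
by have := le_zd x => le_zxd; have -> : (d - z x == 0)%N = false by lia.
Qed.

Definition diffseq (g : nat -> R) (i : nat) : R :=
  g i - (if i is i'.+1 then g i' else 0).

Lemma sum_diffseq g m : \sum_(i < m.+1) diffseq g i = g m.
Proof.
elim: m => [|m IHm]; first by rewrite big_ord1 /diffseq subr0.
by rewrite big_ord_recr /= IHm /diffseq addrC subrK.
Qed.

(* When g is constant from L on, sum_m g m t^m = diffpoly g L / (1 - t). *)
Definition diffpoly (g : nat -> R) (L : nat) : {poly R} := \poly_(i < L.+1) diffseq g i.

Section EventuallyConstant.
Variables (g : nat -> R) (L : nat) (c : R).
Hypothesis g_const : forall m, (L <= m)%N -> g m = c.

Lemma coef_diffpoly i : (diffpoly g L)`_i = diffseq g i.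
Proof.
rewrite coef_poly; case: ltnP => // ltLi; case: i ltLi => [|i] ltLi //.
by rewrite /diffseq !g_const ?subrr //; lia.
Qed.

Lemma coef_diffpoly_geom N m : (m < N)%N -> (diffpoly g L * geom N)`_m = g m.
Proof.
move=> ltmN; rewrite coefM -sum_diffseq; apply: eq_bigr => i _.
by rewrite coef_diffpoly coef_geom (leq_ltn_trans (leq_subr _ _) ltmN) mulr1.
Qed.

Lemma diffpoly1 : (diffpoly g L).[1] = c.
Proof.
rewrite horner_poly; under eq_bigr do rewrite expr1n mulr1.
by rewrite sum_diffseq g_const.
Qed.

End EventuallyConstant.

Lemma prod_sum_Xn (T : finType) n (P : 'I_n -> pred T) (f : 'I_n -> T -> nat) :
  \prod_(j < n) \sum_(x | P j x) ('X^(f j x) : {poly R}) =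
  \sum_(v : {ffun 'I_n -> T} | [forall j, P j (v j)]) 'X^(\sum_j f j (v j)).
Proof.
under eq_bigr do rewrite big_mkcond /=.
rewrite bigA_distr_bigA /= [RHS]big_mkcond /=; apply: eq_bigr => v _.
case: forallP => [Pv|/forallP]; first by rewrite -prodrXr; apply: eq_bigr => j _; rewrite Pv.
by rewrite negb_forall => /existsP[j /negbTE Pvj]; rewrite (bigD1 j) //= Pvj mul0r.
Qed.

Lemma coef_sum_Xn (T : finType) (P : pred T) (f : T -> nat) k :
  (\sum_(v | P v) ('X^(f v) : {poly R}))`_k = #|[pred v | P v && (f v == k)]|%:R.
Proof.
rewrite coef_sum -sum1_card natr_sum [RHS]big_mkcond [LHS]big_mkcond /=.
apply: eq_bigr => v _.
by rewrite inE coefXn eq_sym; case: (P v); case: (f v == k).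
Qed.

End TruncatedSeries.

Arguments geom {R} N.
Arguments eqtrunc_geom {R M N}.

Lemma card_sum_mem (T : finType) (A : {pred T}) : #|A| = (\sum_x (x \in A))%N.
Proof. by rewrite -sum1_card big_mkcond /=; apply: eq_bigr => x _; case: (x \in A). Qed.

Lemma sum_ord_eq L c : (\sum_(x < L) ((x : nat) == c : nat))%N = (c < L)%N.
Proof.
case: ltnP => [ltcL|leLc].
  rewrite (bigD1 (Ordinal ltcL)) //= eqxx big1 // => x ne_xc.
  by case: eqP => // eq_xc; case/eqP: ne_xc; apply: val_inj.
by rewrite big1 // => x _; rewrite ltn_eqF // (leq_trans (ltn_ord x)).
Qed.

Definition count_abs (P : pred int) (m : nat) : int :=
  (P m%:Z + ((m != 0)%N && P (- m%:Z)%R))%N%:R.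

Definition absgen (k : nat) (P : pred int) : {poly int} :=
  \sum_(x : 'I_(k.*2).+1 | P (x%:Z - k%:Z)) 'X^(absz (x%:Z - k%:Z)).

Lemma count_shift_abs (k m : nat) (P : pred int) : (m <= k)%N ->
  (\sum_(x < (k.*2).+1) (P (x%:Z - k%:Z)%R && (absz (x%:Z - k%:Z)%R == m) : nat))%N
   = (P m%:Z + ((m != 0)%N && P (- m%:Z)%R))%N.
Proof.
move=> lemk.
transitivity (\sum_(x < (k.*2).+1) (((x : nat) == k + m)%N * P m%:Z +
                ((x : nat) == k - m)%N * ((m != 0)%N && P (- m%:Z)%R)))%N.
  apply: eq_bigr => x _; have ltx := ltn_ord x.
  case: (eqVneq (x : nat) (k + m)%N) => [xE|ne_x1].
    have -> : x%:Z - k%:Z = m%:Z by lia.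
    rewrite xE eqxx /=; case: (eqVneq m 0%N) => [->|ne_m0] /=.
      by rewrite muln0 addn0 mul1n; case: (P _).
    have -> : (k + m == k - m)%N = false by apply/eqP; lia.
    by rewrite mul1n mul0n addn0; case: (P _).
  case: (eqVneq (x : nat) (k - m)%N) => [xE|ne_x2].
    have -> : x%:Z - k%:Z = - m%:Z by lia.
    have ne_m0 : (m != 0)%N by apply/eqP => m0; move: ne_x1; rewrite xE m0; lia.
    have -> : (absz (- m%:Z) == m) = true by apply/eqP; lia.
    by rewrite ne_m0 /= mul0n add0n mul1n andbT.
  have -> : (absz (x%:Z - k%:Z)%R == m) = false by apply/eqP; lia.
  by rewrite andbF !mul0n.
rewrite big_split /= -!big_distrl /= !sum_ord_eq.
have -> : (k + m < (k.*2).+1)%N by lia.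
have -> : (k - m < (k.*2).+1)%N by lia.
by rewrite !mul1n.
Qed.

Lemma coef_absgen k P m : (m <= k)%N -> (absgen k P)`_m = count_abs P m.
Proof.
move=> lemk; rewrite coef_sum_Xn card_sum_mem.
by rewrite (count_shift_abs P lemk).
Qed.

Definition coord_ok n (Z : varset n) (j : 'I_n) (x : int) : bool :=
  if j \in Z.1 then 0 <= x else if j \in Z.2 then x <= 0 else x == 0.

Definition in_space n (Z : varset n) (u a : mon n) : bool :=
  [forall j, coord_ok Z j (a j - u j)].

Definition mdiv n (a u : mon n) : mon n := [ffun j => a j - u j].

Lemma mmul_mdiv n (u a : mon n) : mmul u (mdiv a u) = a.
Proof. by apply/ffunP => j; rewrite !ffunE addrC subrK. Qed.

Lemma mdiv_mmul n (u w : mon n) : mdiv (mmul u w) u = w.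
Proof. by apply/ffunP => j; rewrite !ffunE addrC addKr. Qed.

Lemma monZ_coord_ok n (Z : varset n) (w : mon n) :
  [disjoint Z.1 & Z.2] -> monZ Z w <-> forall j, coord_ok Z j (w j).
Proof.
move=> disZ; split=> [wZ j | okw j].
  have [w1 [w2 w0]] := wZ j; rewrite /coord_ok.
  case: ifP => j1; first exact: w1.
  case: ifP => j2; first exact: w2.
  by rewrite w0 ?j1 ?j2.
have := okw j; rewrite /coord_ok => okj; split; [|split].
- by move=> j1; rewrite j1 in okj.
- by move=> j2; rewrite (disjointFl disZ j2) j2 in okj.
- by move=> /negbTE j1 /negbTE j2; rewrite j1 j2 in okj; apply/eqP.
Qed.

Lemma in_spaceP n (Z : varset n) (u a : mon n) :
  [disjoint Z.1 & Z.2] -> in_space Z u a <-> monZ Z (mdiv a u).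
Proof.
move=> disZ; rewrite monZ_coord_ok //; split.
  by move=> /forallP ok j; rewrite ffunE.
by move=> ok; apply/forallP => j; have := ok j; rewrite ffunE.
Qed.

Definition nvar n (Z : varset n) (j : 'I_n) : nat := (j \in Z.1) || (j \in Z.2).

Lemma sum_nvar n (Z : varset n) : [disjoint Z.1 & Z.2] -> (\sum_j nvar Z j)%N = zdim Z.
Proof.
move=> disZ; rewrite /zdim !card_sum_mem -big_split /=; apply: eq_bigr => j _.
rewrite /nvar; case: (boolP (j \in Z.1)) => [j1|_] /=; last by rewrite add0n.
by rewrite (disjointFr disZ j1).
Qed.

Lemma count_abs_ge uj m : ((absz uj).+1 <= m)%N -> count_abs (fun x => 0 <= x - uj) m = 1.
Proof.
move=> lt_um; rewrite /count_abs /=.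
have -> : (0 <= m%:Z - uj) = true by apply/idP; lia.
have -> : (0 <= - m%:Z - uj) = false by apply/negbTE/negP; lia.
by rewrite andbF.
Qed.

Lemma count_abs_le uj m : ((absz uj).+1 <= m)%N -> count_abs (fun x => x - uj <= 0) m = 1.
Proof.
move=> lt_um; rewrite /count_abs /=.
have -> : (m%:Z - uj <= 0) = false by apply/negbTE/negP; lia.
have -> : (- m%:Z - uj <= 0) = true by apply/idP; lia.
by have -> : (m != 0)%N by lia.
Qed.

Lemma count_abs_eq uj m : count_abs (fun x => x - uj == 0) m = (m == absz uj)%:R.
Proof.
rewrite /count_abs /=; congr (_%:R).
by case: (m%:Z - uj =P 0) => ?; case: (- m%:Z - uj =P 0) => ?;
  case: (m =P 0%N) => ?; case: (m =P absz uj) => ? /=; lia.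
Qed.

(* The numerator p_j of the generating series of the exponents allowed in
   coordinate j: the series is p_j(t)/(1-t)^(nvar Z j). *)
Definition coord_num n (Z : varset n) (j : 'I_n) (uj : int) : {poly int} :=
  if j \in Z.1 then diffpoly (count_abs (fun x => 0 <= x - uj)) (absz uj).+1
  else if j \in Z.2 then diffpoly (count_abs (fun x => x - uj <= 0)) (absz uj).+1
  else 'X^(absz uj).

Lemma coord_num1 n (Z : varset n) j uj : (coord_num Z j uj).[1] = 1.
Proof.
rewrite /coord_num; case: ifP => _; first exact: (diffpoly1 (@count_abs_ge uj)).
case: ifP => _; first exact: (diffpoly1 (@count_abs_le uj)).
by rewrite hornerXn expr1n.
Qed.

Lemma absgen_coord_ok n (Z : varset n) (j : 'I_n) (uj : int) k :
  eqtrunc k.+1 (absgen k (fun x => coord_ok Z j (x - uj)))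
               (coord_num Z j uj * geom k.+1 ^+ nvar Z j).
Proof.
move=> m lemk; rewrite coef_absgen // /coord_num /nvar /coord_ok.
case: ifP => _ /=; first by rewrite expr1 (coef_diffpoly_geom (@count_abs_ge uj)).
case: ifP => _ /=; first by rewrite expr1 (coef_diffpoly_geom (@count_abs_le uj)).
by rewrite expr0 mulr1 coefXn count_abs_eq.
Qed.

Definition space_num n (Z : varset n) (u : mon n) : {poly int} :=
  \prod_j coord_num Z j (u j).

Lemma space_num1 n (Z : varset n) (u : mon n) : (space_num Z u).[1] = 1.
Proof. by rewrite horner_prod big1 // => j _; apply: coord_num1. Qed.

Lemma card_space n (Z : varset n) (u : mon n) k :
  [disjoint Z.1 & Z.2] ->
  #|[pred v : {ffun 'I_n -> 'I_(k.*2).+1} |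
      (absdeg (shiftv v) == k) && in_space Z u (shiftv v)]|%:R
  = (space_num Z u * geom k.+1 ^+ zdim Z)`_k.
Proof.
move=> disZ; rewrite -(sum_nvar disZ) -prodrXr -big_split /=.
rewrite -(eqtrunc_prod (fun j => @absgen_coord_ok n Z j (u j) k)) //.
rewrite prod_sum_Xn coef_sum_Xn; congr (_%:R); apply: eq_card => v; rewrite !inE andbC.
congr (_ && _); first by apply: eq_forallb => j; rewrite ffunE.
by rewrite /absdeg; congr (_ == _); apply: eq_bigr => j _; rewrite ffunE.
Qed.

Definition hilbpoly n (I J : pred (mon n)) (N : nat) : {poly int} :=
  \poly_(k < N) (hilb I J k)%:Z.

Section StanleyDecomposition.
Variables (n : nat) (A : {set 'I_n}) (I J : pred (mon n)) (r : nat)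
  (u : 'I_r -> mon n) (Z : 'I_r -> varset n).
Hypothesis I_mul : forall a b, I a -> is_mono A b -> I (mmul a b).
Hypothesis decomp : stanley_decomp A I J u Z.

Lemma stanley_disjoint i : [disjoint (Z i).1 & (Z i).2].
Proof. by have [[_ ?] _] := decomp.1 i. Qed.

Lemma IJ_in_space a : (I a && ~~ J a) = [exists i, in_space (Z i) (u i) a].
Proof.
have [space [cover _]] := decomp.
apply/idP/existsP => [/andP[Ia nJa] | [i /(in_spaceP _ _ (stanley_disjoint i)) Zw]].
  have [i [w [Zw ->]]] := cover a Ia nJa.
  by exists i; apply/(in_spaceP _ _ (stanley_disjoint i)); rewrite mdiv_mmul.
have [[Z2A _] [Iu [_ nJuw]]] := space i.
rewrite -(mmul_mdiv (u i) a) nJuw // andbT; apply: I_mul Iu _ => j jA.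
have [Z1w [_ Z0w]] := Zw j.
case: (boolP (j \in (Z i).1)) => [/Z1w //|j1].
by rewrite Z0w //; apply: contra jA; apply: (subsetP Z2A).
Qed.

Lemma in_space_inj i i' a : in_space (Z i) (u i) a -> in_space (Z i') (u i') a -> i = i'.
Proof.
move=> /(in_spaceP _ _ (stanley_disjoint i)) Zw /(in_spaceP _ _ (stanley_disjoint i')) Zw'.
by apply: decomp.2.2 Zw Zw' _; rewrite !mmul_mdiv.
Qed.

Lemma hilb_sum_spaces k :
  hilb I J k = (\sum_i #|[pred v : {ffun 'I_n -> 'I_(k.*2).+1} |
      (absdeg (shiftv v) == k) && in_space (Z i) (u i) (shiftv v)]|)%N.
Proof.
rewrite /hilb card_sum_mem; under [RHS]eq_bigr do rewrite card_sum_mem.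
rewrite exchange_big /=; apply: eq_bigr => v _; rewrite !inE -andbA IJ_in_space.
case: existsP => [[i0 vi0]|nv]; last first.
  rewrite andbF big1 // => i _; rewrite inE.
  have /negbTE-> : ~~ in_space (Z i) (u i) (shiftv v); last by rewrite andbF.
  by apply/negP => vi; apply: nv; exists i.
rewrite andbT (bigD1 i0) //= inE vi0 andbT big1 ?addn0 // => i ne_i; rewrite inE.
have /negbTE-> : ~~ in_space (Z i) (u i) (shiftv v); last by rewrite andbF.
by apply: contra ne_i => vi; rewrite (in_space_inj vi vi0).
Qed.

Lemma hilbpoly_decomp N :
  eqtrunc N (hilbpoly I J N) (\sum_i space_num (Z i) (u i) * geom N ^+ zdim (Z i)).
Proof.
move=> k ltkN; rewrite coef_poly ltkN hilb_sum_spaces -natz natr_sum coef_sum.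
apply: eq_bigr => i _; rewrite card_space ?stanley_disjoint //.
exact: (eqtruncM (eqtrunc_refl _) (eqtruncX _ (eqtrunc_geom ltkN))) (ltnSn k).
Qed.

End StanleyDecomposition.

Theorem theorem6p5 (n : nat) (A : {set 'I_n}) (I J : pred (mon n))
    (r : nat) (u : 'I_r -> mon n) (Z : 'I_r -> varset n) :
  monideal A I -> monideal A J -> {subset J <= I} ->
  stanley_decomp A I J u Z ->
  let d := (\max_(i < r) zdim (Z i))%N in
  exists P : {poly int},
    (forall k : nat,
        P`_k = \sum_(i < k.+1) (hilb I J (k - i))%:Z * ((1 - 'X) ^+ d)`_i) /\
    P.[1] = (#|[set i : 'I_r | zdim (Z i) == d]|)%:Z.
Proof.
move=> [_ I_mul] _ _ decomp d.
have le_zd i : (zdim (Z i) <= d)%N by apply: leq_bigmax.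
exists (\sum_i space_num (Z i) (u i) * (1 - 'X) ^+ (d - zdim (Z i))); split.
  move=> k; have trunc_k := eqtrunc_trans
    (eqtruncM (hilbpoly_decomp I_mul decomp (N := k.+1)) (eqtrunc_refl ((1 - 'X) ^+ d)))
    (eqtrunc_clear_geom _ le_zd).
  rewrite -trunc_k // coefMr; apply: eq_bigr => i _.
  by rewrite coef_poly (leq_ltn_trans (leq_subr _ _) (ltnSn k)).
by rewrite -natz; apply: horner1_clear_geom => // i; apply: space_num1.
Qed.
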